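(* Let $(X,\phi)$ be a flow on a compact metric space $(X,d)$. Then for every $\tau>0$, $$\frac1\tau\overline{\mathrm{mdim}}_M(\phi_\tau,X,d)\le\overline{\mathrm{mdim}}_M(\phi,X,d),\qquad \frac1\tau\underline{\mathrm{mdim}}_M(\phi_\tau,X,d)\le\underline{\mathrm{mdim}}_M(\phi,X,d).$$ If moreover $(X,\phi)$ is a uniformly Lipschitz flow, then both inequalities are equalities.
   Context: A flow: $\phi:X\times\mathbb{R}\to X$ continuous, $\phi_t(x)=\phi(x,t)$, $\phi_0=\mathrm{id}$, $\phi_{t+s}=\phi_t\circ\phi_s$. Uniformly Lipschitz: for every $t_0>0$ there is $L(t_0)>0$ such that for all $\epsilon>0$ and $x,y\in X$, $d(x,y)\le\epsilon/L(t_0)$ implies $d(\phi_sx,\phi_sy)<\epsilon$ for all $s\in[0,t_0]$. Flow metric mean dimension: $d_t(x,y)=\max_{s\in[0,t]}d(\phi_sx,\phi_sy)$; $r_t(\phi,X,d,\epsilon)$ is the minimal cardinality of $E\subset X$ with every $x\in X$ $d_t$-within $\epsilon$ (strictly) of $E$; $r(\phi,X,d,\epsilon)=\limsup_{t\to\infty}\frac1t\log r_t(\phi,X,d,\epsilon)$; $\overline{\mathrm{mdim}}_M(\phi,X,d)=\limsup_{\epsilon\to0}\frac{r(\phi,X,d,\epsilon)}{\log(1/\epsilon)}$, $\underline{\mathrm{mdim}}_M$ with $\liminf$. For the homeomorphism $\phi_\tau$: $d_{n,\phi_\tau}(x,y)=\max_{0\le j\le n-1}d(\phi_{\tau j}x,\phi_{\tau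 j}y)$; $r_n(\phi_\tau,X,d,\epsilon)$ is the minimal cardinality of $E\subset X$ with every $x\in X$ satisfying $d_{n,\phi_\tau}(x,y)<\epsilon$ for some $y\in E$; $r(\phi_\tau,X,d,\epsilon)=\limsup_{n\to\infty}\frac1n\log r_n(\phi_\tau,X,d,\epsilon)$; $\overline{\mathrm{mdim}}_M(\phi_\tau,X,d)=\limsup_{\epsilon\to0}\frac{r(\phi_\tau,X,d,\epsilon)}{\log(1/\epsilon)}$, $\underline{\mathrm{mdim}}_M(\phi_\tau,X,d)$ with $\liminf$. *)

From Stdlib Require List.
From HB Require Import structures.
From mathcomp Require Import all_boot all_order all_algebra.
From mathcomp Require Import all_classical all_reals all_analysis.
Set Implicit Arguments. Unset Strict Implicit. Unset Printing Implicit Defensive.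
Import Order.TTheory GRing.Theory Num.Theory.
Local Open Scope classical_set_scope.
Local Open Scope ring_scope.

Section Defs.
Context {R : realType} {X : Type}.
Implicit Types (d : X -> X -> R) (phi : X -> R -> X).

Definition is_metric d :=
  [/\ forall x y, 0 <= d x y,
      forall x y, d x y = 0 <-> x = y,
      forall x y, d x y = d y x &
      forall x y z, d x z <= d x y + d y z].

Definition dopen d (U : set X) :=
  forall x, U x -> exists2 r : R, 0 < r & forall y, d x y < r -> U y.

Definition dcompact d :=
  forall (I : Type) (U : I -> set X), (forall i, dopen d (U i)) ->
    (forall x, exists i, U i x) ->
    exists s : seq I, forall x, exists i, List.In i s /\ U i x.

(* phi x t = phi_t(x) : a flow *)
Definition is_flow phi :=
  (forall x, phi x 0 = x) /\ (forall x t s, phi x (t + s) = phi (phi x s) t).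

Definition flow_continuous d phi :=
  forall x t (e : R), 0 < e -> exists2 del : R, 0 < del &
    forall y s, d x y < del -> `|t - s| < del -> d (phi x t) (phi y s) < e.

Definition unif_lipschitz d phi :=
  forall t0 : R, 0 < t0 -> exists2 L : R, 0 < L &
    forall (e : R) x y, 0 < e -> d x y <= e / L ->
      forall s, 0 <= s <= t0 -> d (phi x s) (phi y s) < e.

Definition limsup_pinfty (g : R -> \bar R) : \bar R :=
  ereal_inf [set ereal_sup [set g t | t in [set t | T <= t]] | T in [set: R]].
Definition liminf_pinfty (g : R -> \bar R) : \bar R :=
  ereal_sup [set ereal_inf [set g t | t in [set t | T <= t]] | T in [set: R]].
Definition limsup_nat (g : nat -> \bar R) : \bar R :=
  ereal_inf [set ereal_sup [set g n | n in [set n | (N <= n)%N]] | N in [set: nat]].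
Definition limsup_0p (g : R -> \bar R) : \bar R :=
  ereal_inf [set ereal_sup [set g e | e in [set e | 0 < e < del]]
            | del in [set del | 0 < del]].
Definition liminf_0p (g : R -> \bar R) : \bar R :=
  ereal_sup [set ereal_inf [set g e | e in [set e | 0 < e < del]]
            | del in [set del | 0 < del]].

Definition elogdiv (r : \bar R) (t : R) : \bar R :=
  match r with
  | r'%:E => (ln r' / t)%:E
  | +oo%E => +oo%E
  | -oo%E => -oo%E
  end.

(* d_t(x,y) = max_{s in [0,t]} d(phi_s x, phi_s y)  (written as a sup; it is attained) *)
Definition flow_dist d phi (t : R) x y : R :=
  sup [set d (phi x s) (phi y s) | s in [set s | 0 <= s <= t]].

Definition flow_spanning d phi (t e : R) (E : seq X) :=
  forall x, exists y, List.In y E /\ flow_dist d phi t x y < e.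

Definition rt_flow d phi (t e : R) : \bar R :=
  ereal_inf [set ((size E)%:R)%:E | E in flow_spanning d phi t e].

Definition r_flow d phi (e : R) : \bar R :=
  limsup_pinfty (fun t => elogdiv (rt_flow d phi t e) t).

Definition umdim_flow d phi : \bar R :=
  limsup_0p (fun e => (r_flow d phi e * ((ln (1 / e))^-1)%:E)%E).
Definition lmdim_flow d phi : \bar R :=
  liminf_0p (fun e => (r_flow d phi e * ((ln (1 / e))^-1)%:E)%E).

Definition hom_dist d phi (tau : R) (n : nat) x y : R :=
  \big[Num.max/0]_(j < n) d (phi x (tau * j%:R)) (phi y (tau * j%:R)).

Definition hom_spanning d phi tau n (e : R) (E : seq X) :=
  forall x, exists y, List.In y E /\ hom_dist d phi tau n x y < e.

Definition rn_hom d phi tau n (e : R) : \bar R :=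
  ereal_inf [set ((size E)%:R)%:E | E in hom_spanning d phi tau n e].

Definition r_hom d phi tau (e : R) : \bar R :=
  limsup_nat (fun n => elogdiv (rn_hom d phi tau n e) n%:R).

Definition umdim_hom d phi tau : \bar R :=
  limsup_0p (fun e => (r_hom d phi tau e * ((ln (1 / e))^-1)%:E)%E).
Definition lmdim_hom d phi tau : \bar R :=
  liminf_0p (fun e => (r_hom d phi tau e * ((ln (1 / e))^-1)%:E)%E).

End Defs.

From mathcomp Require Import all_boot all_order all_algebra.
From mathcomp Require Import all_classical all_reals all_analysis.
From mathcomp Require Import ring lra.
Import Order.TTheory GRing.Theory Num.Theory.

(* A set that is e-spanning for d_t with t = tau n is also e-spanning for the
   Bowen metric of phi_tau on the n + 1 times 0, tau, ..., tau n, so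
   r_{n+1}(phi_tau, e) <= r_{tau n}(phi, e); comparing the normalisations n + 1
   and tau n gives (1/tau) r(phi_tau, e) <= r(phi, e), whence both inequalities.
   If the flow is uniformly Lipschitz with constant L on [0, tau], points that
   are (e/c)-close at every time tau j, with c = 2 max(L, 1), stay (e/2)-close in
   between, so r_t(phi, e) <= r_{n+1}(phi_tau, e/c) whenever t <= tau n. Hence
   r(phi, e) <= ((1 + eta)/tau) r(phi_tau, e/c) for every eta > 0, and replacing
   e by e/c changes log(1/e) by a factor tending to 1 as e -> 0; letting eta -> 0
   gives the reverse inequalities. *)

Set Implicit Arguments.
Unset Strict Implicit.
Unset Printing Implicit Defensive.

Local Open Scope classical_set_scope.
Local Open Scope ring_scope.

Section RealFacts.
Context {R : realType}.

Lemma bounded_on_list (I : Type) (f : I -> R) (s : seq I) :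
  exists M, forall a, List.In a s -> f a <= M.
Proof.
elim: s => [|b s [M hM]]; first by exists 0.
exists (Num.max (f b) M) => a /= [<-|sa]; first by rewrite le_max lexx.
by rewrite le_max hM ?orbT.
Qed.

Lemma inv_ln_inv_ge0 (e : R) : 0 < e <= 1 -> 0 <= (ln (1 / e))^-1.
Proof.
by case/andP=> e0 e1; rewrite invr_ge0 ln_ge0 // div1r invf_ge1.
Qed.

Lemma inv_ln_inv_dilate (c eta : R) : 1 <= c -> 0 < eta ->
  exists2 d0 : R, 0 < d0 & forall e, 0 < e < d0 ->
    (ln (1 / e))^-1 <= (1 + eta) * (ln (1 / (e / c)))^-1.
Proof.
move=> c1 eta0; exists (Num.min 1 (expR (- ln c / eta))).
  by rewrite lt_min ltr01 expR_gt0.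
move=> e /andP[e0]; rewrite lt_min => /andP[e1 e_small].
have c0 : 0 < c by apply: lt_le_trans c1.
have lnc_ge0 : 0 <= ln c by apply: ln_ge0.
have -> : ln (1 / (e / c)) = ln c + ln (1 / e).
  by rewrite -lnM ?posrE ?divr_gt0 //; congr ln; field; rewrite ?gt_eqF.
rewrite div1r lnV ?posrE //; set l := - ln e.
have lnc_lt : ln c < eta * l.
  have : ln e < - ln c / eta by rewrite -ltr_expR lnK ?posrE.
  by rewrite ltr_pdivlMr // /l => h; nra.
have l_gt0 : 0 < l by rewrite /l oppr_gt0 -ltr_expR lnK ?posrE // expR0.
rewrite -subr_ge0.
have -> : (1 + eta) * (ln c + l)^-1 - l^-1 =
          ((1 + eta) * l - (ln c + l)) / ((ln c + l) * l).
  by field; rewrite !gt_eqF //; lra.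
by apply: divr_ge0; [lra | apply: mulr_ge0; lra].
Qed.

End RealFacts.

Section ExtendedReals.
Context {R : realType}.
Local Open Scope ereal_scope.

Lemma ereal_inf_sup_pZl (I J : Type) (P : set I) (S : I -> set J)
    (g : J -> \bar R) (k : R) : (0 < k)%R ->
  ereal_inf [set ereal_sup [set k%:E * g t | t in S i] | i in P] =
  k%:E * ereal_inf [set ereal_sup [set g t | t in S i] | i in P].
Proof.
move=> k0; under eq_imagel => i _ do rewrite -image_comp ereal_sup_pZl //.
by rewrite -image_comp ereal_inf_pZl.
Qed.

Lemma ereal_sup_inf_pZl (I J : Type) (P : set I) (S : I -> set J)
    (g : J -> \bar R) (k : R) : (0 < k)%R ->
  ereal_sup [set ereal_inf [set k%:E * g t | t in S i] | i in P] =
  k%:E * ereal_sup [set ereal_inf [set g t | t in S i] | i in P].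
Proof.
move=> k0; under eq_imagel => i _ do rewrite -image_comp ereal_inf_pZl //.
by rewrite -image_comp ereal_sup_pZl.
Qed.

Lemma le_of_forall_le_sqr1D (x y : \bar R) : 0 <= y ->
  (forall eta : R, (0 < eta)%R -> x <= (1 + eta)%:E * ((1 + eta)%:E * y)) ->
  x <= y.
Proof.
case: y => [r||] // r0 x_le; last by rewrite leey.
case: x x_le => [a||] x_le; last by rewrite leNye.
- rewrite lee_fin in r0; rewrite lee_fin leNgt; apply/negP => ra.
  pose eta := (Num.min 1 ((a - r) / (3 * (r + 1))))%R.
  have eta0 : (0 < eta)%R by rewrite lt_min ltr01 divr_gt0 //; lra.
  have eta1 : (eta <= 1)%R by rewrite ge_min lexx.
  have : (eta * (3 * (r + 1)) <= a - r)%R.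
    by rewrite -ler_pdivlMr ?ge_min ?lexx ?orbT //; lra.
  by have := x_le eta eta0; rewrite -!EFinM lee_fin; nra.
- by have := x_le 1%R ltr01; rewrite -!EFinM leNgt ltey.
Qed.

(* What the argument needs from [limsup_0p] and [liminf_0p], so that the upper
   and lower mean dimensions are treated at once. *)
Record limit0p_functional (F : (R -> \bar R) -> \bar R) : Prop := {
  lim0p_ge0 : forall g (d0 : R), (0 < d0)%R ->
    (forall e, (0 < e < d0)%R -> 0 <= g e) -> 0 <= F g;
  lim0p_le : forall g h (d0 : R), (0 < d0)%R ->
    (forall e, (0 < e < d0)%R -> g e <= h e) -> F g <= F h;
  lim0p_pZl : forall g (k : R), (0 < k)%R ->
    F (fun e => k%:E * g e) = k%:E * F g;
  lim0p_dilate : forall g (c : R), (1 <= c)%R -> F (fun e => g (e / c)%R) <= F g }.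

Lemma limsup_0p_functional : limit0p_functional limsup_0p.
Proof.
split=> [g d0 d0_gt0 g_ge0|g h d0 d0_gt0 gh|g k k0|g c c1].
- apply: le_ereal_inf_tmp => _ [del del0 <-].
  have [m_le_del m_le_d0] : (Num.min del d0 <= del /\ Num.min del d0 <= d0)%R.
    by rewrite !ge_min !lexx orbT.
  have m_gt0 : (0 < Num.min del d0)%R by rewrite lt_min del0.
  apply: le_trans (ereal_sup_ubound _); last first.
    by exists (Num.min del d0 / 2)%R => //=; apply/andP; split; lra.
  by apply: g_ge0; apply/andP; split; lra.
- apply: le_ereal_inf_tmp => _ [del /= del0 <-].
  pose m := Num.min del d0.
  apply: le_trans (ereal_inf_lbound _) _; first by exists m => //=; rewrite lt_min del0.
  apply: ge_ereal_sup => _ [e /= /andP[e0 +] <-]; rewrite lt_min => /andP[ed ed0].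
  apply: le_trans (gh e _) _; first by rewrite e0.
  by apply: ereal_sup_ubound; exists e => //=; rewrite e0.
- by rewrite /limsup_0p ereal_inf_sup_pZl.
- have c0 : (0 < c)%R by apply: lt_le_trans c1.
  apply: le_ereal_inf_tmp => _ [del /= del0 <-].
  apply: le_trans (ereal_inf_lbound _) _; first by exists del.
  apply: ge_ereal_sup => _ [e /= /andP[e0 ed] <-].
  apply: ereal_sup_ubound; exists (e / c)%R => //=.
  rewrite divr_gt0 //= (le_lt_trans _ ed) //.
  by rewrite ler_pdivrMr // ler_peMr // ltW.
Qed.

Lemma liminf_0p_functional : limit0p_functional liminf_0p.
Proof.
split=> [g d0 d0_gt0 g_ge0|g h d0 d0_gt0 gh|g k k0|g c c1].
- apply: le_trans (ereal_sup_ubound _); last by exists d0.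
  by apply: le_ereal_inf_tmp => _ [e /= e_in <-]; apply: g_ge0.
- apply: ge_ereal_sup => _ [del /= del0 <-].
  pose m := Num.min del d0.
  apply: le_trans (ereal_sup_ubound _); last by exists m => //=; rewrite lt_min del0.
  apply: le_ereal_inf_tmp => _ [e /= /andP[e0 +] <-]; rewrite lt_min => /andP[ed ed0].
  apply: le_trans _ (gh e _); last by rewrite e0.
  by apply: ereal_inf_lbound; exists e => //=; rewrite e0.
- by rewrite /liminf_0p ereal_sup_inf_pZl.
- have c0 : (0 < c)%R by apply: lt_le_trans c1.
  apply: ge_ereal_sup => _ [del /= del0 <-].
  apply: le_trans (ereal_sup_ubound _); last by exists (del / c)%R => //=; rewrite divr_gt0.
  apply: le_ereal_inf_tmp => _ [e /= /andP[e0 ed] <-].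
  have -> : g e = g ((e * c) / c)%R by rewrite mulfK // gt_eqF.
  apply: ereal_inf_lbound; exists (e * c)%R => //=.
  by rewrite mulr_gt0 //= -ltr_pdivlMr.
Qed.

(* [umdim_flow d phi] is [mdim_of limsup_0p (r_flow d phi)] by definition, and
   similarly for the three other mean dimensions. *)
Definition mdim_of (F : (R -> \bar R) -> \bar R) (r : R -> \bar R) : \bar R :=
  F (fun e => r e * ((ln (1 / e))^-1)%:E).

Section MeanDimension.
Variable F : (R -> \bar R) -> \bar R.
Hypothesis hF : limit0p_functional F.

Lemma mdim_of_ge0 (r : R -> \bar R) : (forall e, (0 < e)%R -> 0 <= r e) ->
  0 <= mdim_of F r.
Proof.
move=> r_ge0; apply: (lim0p_ge0 hF ltr01) => e /andP[e0 e1].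
by apply: mule_ge0; rewrite ?r_ge0 // lee_fin inv_ln_inv_ge0 // e0 ltW.
Qed.

Lemma le_mdim_of (k : R) (r1 r2 : R -> \bar R) : (0 < k)%R ->
  (forall e, (0 < e)%R -> k%:E * r1 e <= r2 e) -> k%:E * mdim_of F r1 <= mdim_of F r2.
Proof.
move=> k0 r12; rewrite /mdim_of -(lim0p_pZl hF) //.
apply: (lim0p_le hF ltr01) => e /andP[e0 e1]; rewrite muleA.
by apply: lee_wpmul2r; rewrite ?r12 // lee_fin inv_ln_inv_ge0 // e0 ltW.
Qed.

Lemma mdim_of_dilate (r : R -> \bar R) (c eta : R) : (1 <= c)%R -> (0 < eta)%R ->
  (forall e, (0 < e)%R -> 0 <= r e) ->
  F (fun e => r (e / c)%R * ((ln (1 / e))^-1)%:E) <= (1 + eta)%:E * mdim_of F r.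
Proof.
move=> c1 eta0 r_ge0; have c0 : (0 < c)%R by apply: lt_le_trans c1.
have [d0 d0_gt0 w_le] := inv_ln_inv_dilate c1 eta0.
pose w (e : R) := ((ln (1 / e))^-1)%:E.
apply: le_trans (lim0p_le hF (h := fun e => (1 + eta)%:E * (r (e / c)%R * w (e / c)%R))
  d0_gt0 _) _.
  move=> e e_in; rewrite muleCA; apply: lee_wpmul2l.
    by apply: r_ge0; case/andP: e_in => e0 _; rewrite divr_gt0.
  by rewrite -EFinM lee_fin; apply: w_le.
rewrite (lim0p_pZl hF); last lra.
apply: lee_wpmul2l; first by rewrite lee_fin; lra.
exact: (lim0p_dilate hF (fun e => r e * w e) c1).
Qed.

Lemma le_mdim_of_dilate (k c : R) (r1 r2 : R -> \bar R) : (0 < k)%R -> (1 <= c)%R ->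
  (forall e, (0 < e)%R -> 0 <= r1 e) ->
  (forall eta e, (0 < eta)%R -> (0 < e)%R -> r2 e <= ((1 + eta) * k)%:E * r1 (e / c)%R) ->
  mdim_of F r2 <= k%:E * mdim_of F r1.
Proof.
move=> k0 c1 r1_ge0 r21; apply: le_of_forall_le_sqr1D.
  by apply: mule_ge0; [rewrite lee_fin ltW | exact: mdim_of_ge0].
move=> eta eta0; have k_eta_gt0 : (0 < (1 + eta) * k)%R by rewrite mulr_gt0 //; lra.
apply: le_trans (lim0p_le hF
  (h := fun e => ((1 + eta) * k)%:E * (r1 (e / c)%R * ((ln (1 / e))^-1)%:E)) ltr01 _) _.
  move=> e /andP[e0 e1]; rewrite muleA.
  by apply: lee_wpmul2r; rewrite ?r21 // lee_fin inv_ln_inv_ge0 // e0 ltW.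
rewrite (lim0p_pZl hF) //.
apply: le_trans (lee_wpmul2l _ (mdim_of_dilate c1 eta0 r1_ge0)) _.
  by rewrite lee_fin ltW.
by rewrite EFinM -muleA (muleCA k%:E).
Qed.

Lemma mdim_of_pZl_eq (k c : R) (r1 r2 : R -> \bar R) : (0 < k)%R -> (1 <= c)%R ->
  (forall e, (0 < e)%R -> 0 <= r1 e) ->
  (forall e, (0 < e)%R -> k%:E * r1 e <= r2 e) ->
  (forall eta e, (0 < eta)%R -> (0 < e)%R -> r2 e <= ((1 + eta) * k)%:E * r1 (e / c)%R) ->
  k%:E * mdim_of F r1 = mdim_of F r2.
Proof.
move=> k0 c1 r1_ge0 r12 r21; apply/le_anti/andP; split; first exact: le_mdim_of.
exact: le_mdim_of_dilate r21.
Qed.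

End MeanDimension.

Lemma limsup_nat_pZl (g : nat -> \bar R) (k : R) : (0 < k)%R ->
  limsup_nat (fun n => k%:E * g n) = k%:E * limsup_nat g.
Proof. by move=> k0; rewrite /limsup_nat ereal_inf_sup_pZl. Qed.

Lemma limsup_nat_ge0 (g : nat -> \bar R) : (forall n, 0 <= g n) -> 0 <= limsup_nat g.
Proof.
move=> g_ge0; apply: le_ereal_inf_tmp => _ [N _ <-].
by apply: le_trans (g_ge0 N) _; apply: ereal_sup_ubound; exists N => /=.
Qed.

Lemma limsup_nat_le_pinfty (f : R -> \bar R) (g : nat -> \bar R) (tau : R) :
  (0 < tau)%R -> (forall n, (0 < n)%N -> g n.+1 <= f (tau * n%:R)%R) ->
  limsup_nat g <= limsup_pinfty f.
Proof.
move=> tau0 gf; apply: le_ereal_inf_tmp => _ [T _ <-].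
apply: le_trans (ereal_inf_lbound _) _; first by exists (Num.truncn (T / tau)).+2.
apply: ge_ereal_sup => _ [[|m] /= Nm <-] //.
have T_lt : (T < tau * m%:R)%R.
  rewrite mulrC -ltr_pdivrMr //; apply: lt_le_trans (truncnS_gt _) _.
  by rewrite ler_nat.
apply: le_trans (gf m _) _; first by rewrite -ltnS (leq_trans _ Nm).
by apply: ereal_sup_ubound; exists (tau * m%:R)%R => //=; apply: ltW.
Qed.

Lemma limsup_pinfty_le_nat (f : R -> \bar R) (g : nat -> \bar R) (tau T0 : R) :
  (0 < tau)%R -> (forall t, (T0 <= t)%R -> f t <= g (Num.truncn (t / tau)).+2) ->
  limsup_pinfty f <= limsup_nat g.
Proof.
move=> tau0 fg; apply: le_ereal_inf_tmp => _ [N _ <-].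
apply: le_trans (ereal_inf_lbound _) _; first by exists (Num.max T0 (tau * N%:R))%R.
apply: ge_ereal_sup => _ [t /= + <-]; rewrite ge_max => /andP[T0t Nt].
apply: le_trans (fg t T0t) _; apply: ereal_sup_ubound; exists (Num.truncn (t / tau)).+2 => //=.
have tau_le : (N%:R <= t / tau)%R by rewrite ler_pdivlMr // mulrC.
by rewrite leqW // leqW // truncn_ge_nat // (le_trans _ tau_le).
Qed.

End ExtendedReals.

Section LogRate.
Context {R : realType}.
Local Open Scope ereal_scope.

Definition zero_or_ge1 (x : \bar R) := x = 0 \/ 1 <= x.

Lemma ereal_inf_natr_zero_or_ge1 (T : Type) (A : set T) (f : T -> nat) :
  zero_or_ge1 (ereal_inf [set (f a)%:R%:E | a in A]).
Proof.
have [[a Aa fa0]|no_zero] := pselect (exists2 a, A a & f a = 0%N).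
  left; apply/le_anti/andP; split.
    by apply: ereal_inf_lbound; exists a => //; rewrite fa0.
  by apply: le_ereal_inf_tmp => _ [b _ <-]; rewrite lee_fin ler0n.
right; apply: le_ereal_inf_tmp => _ [b Ab <-]; rewrite lee_fin ler1n lt0n.
by apply/eqP => fb0; apply: no_zero; exists b.
Qed.

Lemma elogdiv_ge0 (x : \bar R) (t : R) : zero_or_ge1 x -> (0 <= t)%R ->
  0 <= elogdiv x t.
Proof.
case=> [->|]; first by rewrite /= ln0 // mul0r.
case: x => [r| |] //= r1 t0.
by rewrite lee_fin divr_ge0 // ln_ge0.
Qed.

Lemma le_elogdiv (x y : \bar R) (t : R) : zero_or_ge1 x -> zero_or_ge1 y -> x <= y ->
  (0 <= t)%R -> elogdiv x t <= elogdiv y t.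
Proof.
move=> [->|x1] y01 xy t0; first by rewrite /= ln0 // mul0r elogdiv_ge0.
case: x y y01 x1 xy => [a| |] [b| |] //= _ a1; rewrite ?leey ?leye_eq //.
rewrite !lee_fin => ab; apply: ler_wpM2r; first by rewrite invr_ge0.
have a0 : (0 < a)%R by apply: lt_le_trans ltr01 a1.
by rewrite ler_ln ?posrE // (lt_le_trans a0 ab).
Qed.

Lemma le_elogdiv_time (x : \bar R) (t t' : R) : zero_or_ge1 x -> (0 < t' <= t)%R ->
  elogdiv x t <= elogdiv x t'.
Proof.
case=> [->|]; first by rewrite /= ln0 // !mul0r.
case: x => [a| |] //= a1 /andP[t'0 t't].
rewrite lee_fin ler_wpM2l ?ln_ge0 //.
by rewrite lef_pV2 // posrE; apply: lt_le_trans t't.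
Qed.

Lemma mule_elogdiv (x : \bar R) (t k : R) : (0 < k)%R ->
  k%:E * elogdiv x t = elogdiv x (t / k).
Proof.
case: x => [a| |] k0 /=.
- by rewrite -EFinM; congr EFin; rewrite invf_div mulrCA.
- by rewrite muleC gt0_mulye // lte_fin.
- by rewrite muleC gt0_mulNye // lte_fin.
Qed.

End LogRate.


Section FlowAndTimeMap.
Context {R : realType} {X : Type} (d : X -> X -> R) (phi : X -> R -> X).

Lemma dcompact_bounded : is_metric d -> dcompact d -> exists B, forall x y, d x y <= B.
Proof.
case=> _ d_eq0 d_sym d_tri d_cpt.
have [[x0 _]|noX] := pselect (exists x : X, True); last first.
  by exists 0 => x; case: noX; exists x.
have ball_open a : dopen d (fun y => d a y < 1).
  move=> y ay; exists (1 - d a y) => [|z yz]; first by rewrite subr_gt0.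
  by apply: le_lt_trans (d_tri a y z) _; rewrite -ltrBrDl.
have ball_cover x : exists a, d a x < 1.
  by exists x; rewrite (proj2 (d_eq0 x x)).
have [s s_cover] := d_cpt X _ ball_open ball_cover.
have [M hM] := bounded_on_list (d x0) s.
have near_x0 w : d x0 w <= M + 1.
  have [a [sa aw]] := s_cover w; have := hM a sa; have := d_tri x0 a w; lra.
exists (2 * (M + 1)) => y z.
by have := d_tri y x0 z; have := d_sym y x0; have := near_x0 y; have := near_x0 z; lra.
Qed.

Variable tau : R.
Hypothesis tau_gt0 : 0 < tau.

Lemma rn_hom_zero_or_ge1 n e : zero_or_ge1 (rn_hom d phi tau n e).
Proof. exact: ereal_inf_natr_zero_or_ge1. Qed.

Lemma rt_flow_zero_or_ge1 t e : zero_or_ge1 (rt_flow d phi t e).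
Proof. exact: ereal_inf_natr_zero_or_ge1. Qed.

Lemma r_hom_ge0 e : (0 <= r_hom d phi tau e)%E.
Proof.
by apply: limsup_nat_ge0 => n; apply: elogdiv_ge0 (rn_hom_zero_or_ge1 _ _) (ler0n _ _).
Qed.

Lemma hom_dist_ge n j x y : (j < n)%N ->
  d (phi x (tau * j%:R)) (phi y (tau * j%:R)) <= hom_dist d phi tau n x y.
Proof.
move=> jn; exact: (@le_bigmax _ _ _ 0
  (fun i : 'I_n => d (phi x (tau * i%:R)) (phi y (tau * i%:R))) (Ordinal jn)).
Qed.

Section BoundedMetric.
Hypothesis d_ge0 : forall x y, 0 <= d x y.
Variable B : R.
Hypothesis d_le : forall x y, d x y <= B.

Lemma flow_dist_ge t x y s : 0 <= s <= t ->
  d (phi x s) (phi y s) <= flow_dist d phi t x y.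
Proof.
move=> st; apply: sup_upper_bound; last by exists s.
split; first by exists (d (phi x s) (phi y s)); exists s.
by exists B => _ [s' _ <-].
Qed.

Lemma hom_dist_le_flow_dist n x y :
  hom_dist d phi tau n.+1 x y <= flow_dist d phi (tau * n%:R) x y.
Proof.
have tau_mul_ge0 (m : nat) : 0 <= tau * m%:R := mulr_ge0 (ltW tau_gt0) (ler0n _ _).
apply: bigmax_le => [|i _].
  by apply: le_trans (flow_dist_ge x y (s := 0) _); rewrite ?d_ge0 ?lexx ?tau_mul_ge0.
apply: flow_dist_ge; rewrite tau_mul_ge0 /=.
by rewrite ler_pM2l // ler_nat -ltnS.
Qed.

Lemma rn_hom_le_rt_flow n e :
  (rn_hom d phi tau n.+1 e <= rt_flow d phi (tau * n%:R) e)%E.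
Proof.
apply/ereal_inf_le_tmp/image_subset => E E_span x.
have [y [Ey xy]] := E_span x; exists y; split => //.
exact: le_lt_trans (hom_dist_le_flow_dist n x y) xy.
Qed.

Lemma r_hom_le_r_flow e : ((tau^-1)%:E * r_hom d phi tau e <= r_flow d phi e)%E.
Proof.
rewrite -limsup_nat_pZl ?invr_gt0 //.
apply: (limsup_nat_le_pinfty tau_gt0) => n n_gt0.
rewrite mule_elogdiv ?invr_gt0 // invrK.
apply: le_trans (le_elogdiv_time (rn_hom_zero_or_ge1 _ _) _)
  (le_elogdiv (rn_hom_zero_or_ge1 _ _) (rt_flow_zero_or_ge1 _ _) (rn_hom_le_rt_flow n e) _).
  by rewrite mulr_gt0 ?ltr0n //= mulrC ler_pM2r // ler_nat.
exact: mulr_ge0 (ltW tau_gt0) (ler0n _ _).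
Qed.

End BoundedMetric.

Section UniformlyLipschitz.
Hypothesis phi_flow : is_flow phi.
Variable L : R.
Hypothesis L_gt0 : 0 < L.
Hypothesis phi_lip : forall (e : R) x y, 0 < e -> d x y <= e / L ->
  forall s, 0 <= s <= tau -> d (phi x s) (phi y s) < e.

Lemma dist_flow_lt_of_dist_at_multiple j s x y e : 0 < e ->
  tau * j%:R <= s <= tau * j.+1%:R ->
  d (phi x (tau * j%:R)) (phi y (tau * j%:R)) <= e / L -> d (phi x s) (phi y s) < e.
Proof.
move=> e0 /andP[js sj] dj.
have shift z : phi z s = phi (phi z (tau * j%:R)) (s - tau * j%:R).
  by rewrite -(proj2 phi_flow) subrK.
rewrite !shift; apply: phi_lip => //.
by move: sj; rewrite -natr1 mulrDr mulr1 => sj; apply/andP; split; lra.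
Qed.

(* The factor 2 absorbs the loss of strictness when passing to the supremum
   defining [flow_dist]. *)
Let scale := 2 * Num.max L 1.

Lemma flow_dist_lt_of_hom_dist n t e x y : 0 < e -> 0 <= t <= tau * n%:R ->
  hom_dist d phi tau n.+1 x y < e / scale -> flow_dist d phi t x y < e.
Proof.
move=> e0 /andP[t0 tn] hd.
have ec_le : e / scale <= e / 2 / L.
  have max_gt0 : 0 < Num.max L 1 by rewrite lt_max L_gt0.
  rewrite /scale -[e / 2 / L]mulrA -invfM ler_pM2l // lef_pV2 ?posrE ?mulr_gt0 //.
  by rewrite ler_pM2l // le_max lexx.
apply: (@le_lt_trans _ _ (e / 2)); last lra.
apply: ge_sup => [|_ [s /andP[s0 st] <-]].
  by exists (d (phi x 0) (phi y 0)), 0 => //=; rewrite lexx.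
have s_tau_ge0 : 0 <= s / tau by rewrite divr_ge0 // ltW.
pose j := Num.truncn (s / tau).
have jn : (j < n.+1)%N.
  rewrite ltnS truncn_le_nat ltr_pdivrMr //; apply: le_lt_trans st _.
  by apply: le_lt_trans tn _; rewrite mulrC ltr_pM2r // ltr_nat.
apply/ltW/(dist_flow_lt_of_dist_at_multiple (j := j)); first lra.
  rewrite mulrC -ler_pdivlMr // truncn_le s_tau_ge0 /=.
  by rewrite mulrC -ler_pdivrMr // ltW // truncnS_gt.
exact: le_trans (hom_dist_ge _ _ jn) (ltW (lt_le_trans hd ec_le)).
Qed.

Lemma rt_flow_le_rn_hom n t e : 0 < e -> 0 <= t <= tau * n%:R ->
  (rt_flow d phi t e <= rn_hom d phi tau n.+1 (e / scale))%E.
Proof.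
move=> e0 tn; apply/ereal_inf_le_tmp/image_subset => E E_span x.
have [y [Ey xy]] := E_span x; exists y; split => //.
exact: flow_dist_lt_of_hom_dist xy.
Qed.

Lemma r_flow_le_r_hom : exists2 c : R, 1 <= c &
  forall eta e, 0 < eta -> 0 < e ->
    (r_flow d phi e <= ((1 + eta) * tau^-1)%:E * r_hom d phi tau (e / c))%E.
Proof.
exists scale; first by rewrite /scale; have := le_max 1 L 1; rewrite lexx orbT; lra.
move=> eta e eta0 e0; have k_gt0 : 0 < (1 + eta) * tau^-1.
  by rewrite mulr_gt0 ?invr_gt0 //; lra.
rewrite -limsup_nat_pZl //.
(* Beyond t = 2 tau / eta, replacing t by tau (floor (t / tau) + 2) costs at most
   a factor 1 + eta. *)
apply: (limsup_pinfty_le_nat (T0 := 2 * tau / eta) tau_gt0) => t t_ge.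
pose j := Num.truncn (t / tau).
have t_gt0 : 0 < t by apply: lt_le_trans t_ge; rewrite divr_gt0 ?mulr_gt0.
have j_le : tau * j%:R <= t.
  by rewrite mulrC -ler_pdivlMr // truncn_le divr_ge0 // ltW.
have t_lt : t < tau * j.+1%:R by rewrite mulrC -ltr_pdivrMr // truncnS_gt.
rewrite mule_elogdiv //.
apply: le_trans (le_elogdiv (rt_flow_zero_or_ge1 _ _) (rn_hom_zero_or_ge1 _ _)
  (rt_flow_le_rn_hom (n := j.+1) e0 _) (ltW t_gt0)) (le_elogdiv_time (rn_hom_zero_or_ge1 _ _) _).
  by rewrite (ltW t_gt0) ltW.
rewrite -/j divr_gt0 ?ltr0n //=.
have -> : j.+2%:R / ((1 + eta) / tau) = j.+2%:R * tau / (1 + eta).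
  by field; rewrite !gt_eqF //; lra.
have two_tau_le : 2 * tau <= t * eta by rewrite -ler_pdivrMr.
rewrite ler_pdivrMr; last lra.
by rewrite -addn2 natrD; nra.
Qed.

End UniformlyLipschitz.

End FlowAndTimeMap.

Theorem proposition2p7 (R : realType) (X : Type) (d : X -> X -> R)
    (phi : X -> R -> X) :
  is_metric d -> dcompact d -> is_flow phi -> flow_continuous d phi ->
  forall tau : R, 0 < tau ->
    ((tau^-1)%:E * umdim_hom d phi tau <= umdim_flow d phi)%E /\
    ((tau^-1)%:E * lmdim_hom d phi tau <= lmdim_flow d phi)%E /\
    (unif_lipschitz d phi ->
       ((tau^-1)%:E * umdim_hom d phi tau = umdim_flow d phi)%E /\
       ((tau^-1)%:E * lmdim_hom d phi tau = lmdim_flow d phi)%E).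
Proof.
move=> d_metric d_cpt phi_flow _ tau tau_gt0.
have [B d_le] := dcompact_bounded d_metric d_cpt.
have d_ge0 : forall x y, 0 <= d x y by case: d_metric.
have hom_le_flow e (_ : 0 < e) := r_hom_le_r_flow phi tau_gt0 d_ge0 d_le e.
have compare F : limit0p_functional F ->
    ((tau^-1)%:E * mdim_of F (r_hom d phi tau) <= mdim_of F (r_flow d phi))%E /\
    (unif_lipschitz d phi ->
       ((tau^-1)%:E * mdim_of F (r_hom d phi tau) = mdim_of F (r_flow d phi))%E).
  move=> hF; split=> [|/(_ tau tau_gt0) [L L_gt0 phi_lip]].
    by apply: (le_mdim_of hF _ hom_le_flow); rewrite invr_gt0.
  have [c c_ge1 flow_le_hom] := r_flow_le_r_hom tau_gt0 phi_flow L_gt0 phi_lip.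
  apply: (mdim_of_pZl_eq hF _ c_ge1 _ hom_le_flow flow_le_hom).
    by rewrite invr_gt0.
  by move=> e _; apply: r_hom_ge0.
have [le_u eq_u] := compare _ limsup_0p_functional.
have [le_l eq_l] := compare _ liminf_0p_functional.
split; first exact: le_u.
split; first exact: le_l.
by move=> phi_lip; split; [exact: eq_u | exact: eq_l].
Qed.
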